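(* Let $L$ be a consistent pretransitive logic, $k\le\omega$, and $\mathfrak F$ the $k$-canonical frame of $L$. (1) For every point $x$ of $\mathfrak F$ and every $0\le h<\omega$: the depth of $x$ in $\mathfrak F$ is at most $h$ iff $B_h(\psi_1,\dots,\psi_h)\in x$ for all $k$-formulas $\psi_1,\dots,\psi_h$ (where $B_h(\psi_1,\dots,\psi_h)$ is obtained from $B_h$ by substituting $\psi_j$ for $p_j$). (2) For $0<h<\omega$, the $k$-canonical frame of $L[h]$ coincides with $\mathfrak F^{(h)}$, the restriction of $\mathfrak F$ to its points of depth at most $h$.
   Context: Logics are normal $n$-modal logics; a $k$-formula uses only $p_j$, $j<k$. $\Diamond^0\varphi=\varphi$, $\Diamond^{i+1}\varphi=\Diamond^i(\bigvee_{j<n}\Diamond_j\varphi)$, $\Diamond^{\le m}\varphi=\bigvee_{i\le m}\Diamond^i\varphi$. $L$ is pretransitive if $L\vdash\Diamond^{m+1}p\to\Diamond^{\le m}p$ for some $m$; for the least such $m$, $\Diamond^*=\Diamond^{\le m}$, $\Box^*=\neg\Diamond^*\neg$. $B_0=\bot$, $B_{i+1}=p_{i+1}\to\Box^*(\Diamond^*p_{i+1}\vee B_i)$; $L[h]=L+B_h$. The $k$-canonical frame of a consistent $L$ has points the maximal $L$-consistent sets of $k$-formulas, $xR_iy$ iff $\Diamond_i\psi\in x$ for all $k$-formulas $\psi\in y$. For a frame $\mathfrak F=(W,(R_i)_{i<n})$, $R_{\mathfrak F}=\bigcup R_i$, $R^*_{\mathfrak F}$ its reflexive transitive closure; clusters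 are the classes of $R^*_{\mathfrak F}\cap(R^*_{\mathfrak F})^{-1}$, ordered by $C\le D$ iff $xR^*_{\mathfrak F}y$ for some $x\in C,y\in D$ (the skeleton). A poset has height $h$ if it has a chain of $h$ elements and none longer; the height of a frame is the height of its skeleton. The restriction $\mathfrak F\restriction V=(V,(R_i\cap V^2)_{i<n})$; the depth of $x$ is the height of $\mathfrak F\restriction R^*_{\mathfrak F}(x)$. *)

From mathcomp Require Import all_boot.
Set Implicit Arguments. Unset Strict Implicit. Unset Printing Implicit Defensive.

Inductive form (n : nat) : Type :=
| Var of nat
| Bot
| Imp of form n & form n
| Box of 'I_n & form n.
Arguments Var {n} _.
Arguments Bot {n}.

Section Syntax.
Variable n : nat.
Definition Not (a : form n) : form n := Imp a Bot.
Definition Top : form n := Imp Bot Bot.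
Definition Or (a b : form n) : form n := Imp (Not a) b.
Definition And (a b : form n) : form n := Not (Imp a (Not b)).
Definition Dia (i : 'I_n) (a : form n) : form n := Not (Box i (Not a)).
Definition bigOr (s : seq (form n)) : form n := foldr Or Bot s.
Definition bigAnd (s : seq (form n)) : form n := foldr And Top s.

Definition diaAll (a : form n) : form n := bigOr [seq Dia j a | j <- enum 'I_n].
Fixpoint diaPow (i : nat) (a : form n) : form n :=
  match i with 0 => a | i'.+1 => diaPow i' (diaAll a) end.
Definition diaLe (m : nat) (a : form n) : form n :=
  bigOr [seq diaPow i a | i <- iota 0 m.+1].

Fixpoint subst (s : nat -> form n) (a : form n) : form n :=
  match a with
  | Var j => s j
  | Bot => Bot
  | Imp b c => Imp (subst s b) (subst s c)
  | Box i b => Box i (subst s b)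
  end.

(* k <= omega encoded as option nat, None = omega; k-formula: only p_j, j < k *)
Definition kvar (k : option nat) (j : nat) : bool :=
  if k is Some m then j < m else true.
Fixpoint kform (k : option nat) (a : form n) : bool :=
  match a with
  | Var j => kvar k j
  | Bot => true
  | Imp b c => kform k b && kform k c
  | Box _ b => kform k b
  end.

(* propositional tautologies: modal subformulas treated as atoms *)
Fixpoint peval (v : form n -> bool) (a : form n) : bool :=
  match a with
  | Var _ => v a
  | Bot => false
  | Imp b c => peval v b ==> peval v c
  | Box _ _ => v a
  end.
Definition tautology (a : form n) : Prop := forall v, peval v a.

Definition normal_logic (L : form n -> Prop) : Prop :=
  [/\ (forall a, tautology a -> L a),
      (forall i : 'I_n, L (Imp (Box i (Imp (Var 0) (Var 1)))
                               (Imp (Box i (Var 0)) (Box i (Var 1))))),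
      (forall a b, L (Imp a b) -> L a -> L b),
      (forall (i : 'I_n) a, L a -> L (Box i a)) &
      (forall s a, L a -> L (subst s a))].

Definition consistent_logic (L : form n -> Prop) : Prop := ~ L Bot.

Definition pt_at (L : form n -> Prop) (m : nat) : Prop :=
  L (Imp (diaPow m.+1 (Var 0)) (diaLe m (Var 0))).
Definition pretransitive (L : form n -> Prop) : Prop := exists m, pt_at L m.
(* m is the least witness of pretransitivity; then Dia^* = Dia^{<= m} *)
Definition least_pt (L : form n -> Prop) (m : nat) : Prop :=
  pt_at L m /\ forall m', m' < m -> ~ pt_at L m'.

Definition diaStar (m : nat) (a : form n) : form n := diaLe m a.
Definition boxStar (m : nat) (a : form n) : form n := Not (diaStar m (Not a)).

Fixpoint Bh (m : nat) (i : nat) : form n :=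
  match i with
  | 0 => Bot
  | i'.+1 => Imp (Var i) (boxStar m (Or (diaStar m (Var i)) (Bh m i')))
  end.

(* L + A : the least normal logic containing L and A (L assumed normal) *)
Inductive ext (L : form n -> Prop) (A : form n) : form n -> Prop :=
| ext_L a : L a -> ext L A a
| ext_A : ext L A A
| ext_MP a b : ext L A (Imp a b) -> ext L A a -> ext L A b
| ext_Nec (i : 'I_n) a : ext L A a -> ext L A (Box i a)
| ext_Sub s a : ext L A a -> ext L A (subst s a).

Fixpoint inlist (a : form n) (s : seq (form n)) : Prop :=
  if s is b :: s' then b = a \/ inlist a s' else False.

Definition Lconsistent (L : form n -> Prop) (x : form n -> Prop) : Prop :=
  forall s : seq (form n), (forall a, inlist a s -> x a) -> ~ L (Not (bigAnd s)).

Definition mcs (L : form n -> Prop) (k : option nat) (x : form n -> Prop) : Prop :=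
  [/\ (forall a, x a -> kform k a),
      Lconsistent L x &
      (forall a, kform k a -> ~ x a ->
         ~ Lconsistent L (fun b => x b \/ b = a))].

Definition canon_rel (k : option nat) (i : 'I_n) (x y : form n -> Prop) : Prop :=
  forall psi, kform k psi -> y psi -> x (Dia i psi).
End Syntax.

Record frame (n : nat) := Frame { fW : Type; fR : 'I_n -> fW -> fW -> Prop }.
Arguments Frame {n} fW fR.
Arguments fW {n} f.
Arguments fR {n} f i _ _.

Inductive rtc (T : Type) (R : T -> T -> Prop) : T -> T -> Prop :=
| rtc_refl x : rtc R x x
| rtc_step x y z : R x y -> rtc R y z -> rtc R x z.

Section Frames.
Variables (n : nat) (F : frame n).
Definition RF (a b : fW F) : Prop := exists i, fR F i a b.
Definition Rstar : fW F -> fW F -> Prop := rtc RF.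
Definition cluster_of (x : fW F) : fW F -> Prop := fun y => Rstar x y /\ Rstar y x.
Definition is_cluster (C : fW F -> Prop) : Prop := exists x, C = cluster_of x.
Definition skeleton : Type := {C : fW F -> Prop | is_cluster C}.
Definition skel_le (C D : skeleton) : Prop :=
  exists x y, sval C x /\ sval D y /\ Rstar x y.
Definition restrict (V : fW F -> Prop) : frame n :=
  Frame {w : fW F | V w} (fun i a b => fR F i (sval a) (sval b)).
End Frames.

Definition has_chain (T : Type) (le : T -> T -> Prop) (h : nat) : Prop :=
  exists f : 'I_h -> T, injective f /\ forall i j, le (f i) (f j) \/ le (f j) (f i).
Definition has_height (T : Type) (le : T -> T -> Prop) (h : nat) : Prop :=
  has_chain le h /\ forall h', h < h' -> ~ has_chain le h'.
Definition frame_height (n : nat) (F : frame n) (h : nat) : Prop :=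
  has_height (@skel_le n F) h.
Definition depth_le (n : nat) (F : frame n) (x : fW F) (h : nat) : Prop :=
  exists h', h' <= h /\ frame_height (restrict (Rstar x)) h'.

Definition canon (n : nat) (L : form n -> Prop) (k : option nat) : frame n :=
  Frame {x : form n -> Prop | mcs L k x} (fun i a b => canon_rel k i (sval a) (sval b)).

Definition restrict_depth (n : nat) (F : frame n) (h : nat) : frame n :=
  restrict (fun w : fW F => depth_le w h).

(* In the k-canonical frame of a pretransitive logic, [Dia^* a] belongs to [x] exactly when
   [a] belongs to some [R^*]-successor of [x], and [x] reaches [y] whenever every formula of
   [y] has its [Dia^*] in [x]; the latter is a compactness argument, using that [Dia^*] is
   the finite disjunction of the [Dia^i], [i <= m].  Hence the depth of [x] exceeds [h]
   exactly when there is a chain [x = x_0 R^* x_1 ... R^* x_h] along which no step can be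
   reversed, and such a chain is what refutes an instance of [B_h] at [x]: [p_{i+1}] is
   instantiated by a formula of [x_{h-i-1}] whose [Dia^*] fails at [x_{h-i}].  For (2), the
   points of depth at most [h] validate every theorem of [L[h]], since they contain all
   instances of [L]-theorems and of [B_h] and are closed under successors (for
   necessitation); conversely a maximal [L[h]]-consistent set contains all instances of
   [B_h], so has depth at most [h] by (1). *)

From HB Require Import structures.
From mathcomp Require Import all_boot zify.
From Stdlib Require Import Classical ProofIrrelevance FunctionalExtensionality PropExtensionality.
Set Implicit Arguments. Unset Strict Implicit. Unset Printing Implicit Defensive.

Section FormulaCountable.
Variable n : nat.

Fixpoint form_enc (a : form n) : GenTree.tree nat :=
  match a with
  | Var j => GenTree.Node 0 [:: GenTree.Leaf j]
  | Bot => GenTree.Node 1 [::]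
  | Imp b c => GenTree.Node 2 [:: form_enc b; form_enc c]
  | Box i b => GenTree.Node 3 [:: GenTree.Leaf (nat_of_ord i); form_enc b]
  end.

Fixpoint form_dec (t : GenTree.tree nat) : option (form n) :=
  match t with
  | GenTree.Node 0 [:: GenTree.Leaf j] => Some (Var j)
  | GenTree.Node 1 [::] => Some Bot
  | GenTree.Node 2 [:: t1; t2] =>
      if (form_dec t1, form_dec t2) is (Some a, Some b) then Some (Imp a b) else None
  | GenTree.Node 3 [:: GenTree.Leaf i; t1] =>
      if (insub i, form_dec t1) is (Some i', Some a) then Some (Box i' a) else None
  | _ => None
  end.

Lemma form_encK : pcancel form_enc form_dec.
Proof. by elim=> //= [b -> c ->|i b ->] //; rewrite valK. Qed.

End FormulaCountable.

HB.instance Definition _ (n : nat) := Countable.copy (form n) (pcan_type (@form_encK n)).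

Ltac peval_cases := simpl; repeat match goal with
  | |- context [peval ?v ?x] => case: (peval v x)
  | |- context [?v (Box ?i ?x)] => case: (v (Box i x))
  | |- context [?v (Var ?j)] => case: (v (Var j))
  end; try done.

Section Propositional.
Variable n : nat.
Implicit Types (a b : form n) (s t : seq (form n)) (v : form n -> bool).

Lemma inlistE a s : inlist a s <-> a \in s.
Proof.
elim: s => //= b s ->; rewrite in_cons.
by split=> [[->|->]|/orP[/eqP->|]]; rewrite ?eqxx ?orbT //; [left|right].
Qed.

Lemma peval_And v a b : peval v (And a b) = peval v a && peval v b.
Proof. by rewrite /=; case: (peval v a); case: (peval v b). Qed.

Lemma peval_bigAnd v s : peval v (bigAnd s) = all (peval v) s.
Proof. by elim: s => //= b s <-; rewrite -peval_And. Qed.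

Lemma tautology_bigAnd_sub s t : {subset s <= t} -> tautology (Imp (bigAnd t) (bigAnd s)).
Proof.
by move=> st v /=; rewrite !peval_bigAnd; apply/implyP => /allP Ht; apply/allP => a /st/Ht.
Qed.

Lemma kform_bigAnd k s : kform k (bigAnd s) = all (kform k) s.
Proof. by elim: s => //= b s <-; rewrite !andbT. Qed.

Lemma kform_bigOr k s : kform k (bigOr s) = all (kform k) s.
Proof. by elim: s => //= b s <-; rewrite !andbT. Qed.

Lemma seq_union_split (P Q : form n -> Prop) s : {in s, forall a, P a \/ Q a} ->
  exists s1 s2, [/\ {in s1, forall a, P a}, {in s2, forall a, Q a}
                  & {subset s <= s1 ++ s2}].
Proof.
elim: s => [|b s IH] Hs; first by exists [::], [::].
have [|s1 [s2 [H1 H2 Hsub]]] := IH; first by move=> a Ha; apply: Hs; rewrite inE Ha orbT.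
have [Pb|Qb] := Hs b (mem_head b s).
- exists (b :: s1), s2; split=> // a; first by rewrite inE => /orP[/eqP->|/H1].
  rewrite inE => /orP[/eqP->|/Hsub]; first exact: mem_head.
  by rewrite cat_cons inE => ->; rewrite orbT.
- exists s1, (b :: s2); split=> // a; first by rewrite inE => /orP[/eqP->|/H2].
  rewrite inE => /orP[/eqP->|/Hsub]; first by rewrite mem_cat mem_head orbT.
  by rewrite !mem_cat inE => /orP[]->; rewrite ?orbT.
Qed.

End Propositional.

Section Modalities.
Variable n : nat.
Implicit Types (a b : form n) (sg : nat -> form n).

Lemma diaPow_iter l a : diaPow l a = iter l (@diaAll n) a.
Proof. by elim: l a => //= l IH a; rewrite IH -iterSr. Qed.

Lemma diaPow_S l a : diaPow l.+1 a = diaAll (diaPow l a).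
Proof. by rewrite !diaPow_iter. Qed.

Lemma diaPow_add i j a : diaPow (i + j) a = diaPow i (diaPow j a).
Proof. by rewrite !diaPow_iter iterD. Qed.

Lemma kform_Imp k a b : kform k (Imp a b) = kform k a && kform k b.
Proof. by []. Qed.

Lemma kform_Not k a : kform k (Not a) = kform k a.
Proof. exact: andbT. Qed.

Lemma kform_Or k a b : kform k (Or a b) = kform k a && kform k b.
Proof. by rewrite /= andbT. Qed.

Lemma kform_Dia k i a : kform k (Dia i a) = kform k a.
Proof. by rewrite /= !andbT. Qed.

Lemma kform_diaAll k a : kform k a -> kform k (diaAll a).
Proof. by move=> Ha; rewrite kform_bigOr all_map; apply/allP => j _ /=; rewrite Ha. Qed.

Lemma kform_diaPow k l a : kform k a -> kform k (diaPow l a).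
Proof. by rewrite diaPow_iter; elim: l => //= l IH /IH /kform_diaAll. Qed.

Lemma kform_diaLe k l a : kform k (diaLe l a) = kform k a.
Proof.
rewrite kform_bigOr all_map; apply/idP/idP => [/allP/(_ 0)|Ha].
  by apply; rewrite mem_iota.
by apply/allP => i _; exact: kform_diaPow.
Qed.

Lemma kform_boxStar k l a : kform k (boxStar l a) = kform k a.
Proof. by rewrite /boxStar kform_Not /diaStar kform_diaLe kform_Not. Qed.

Lemma kform_subst k sg a : (forall j, kform k (sg j)) -> kform k (subst sg a).
Proof. by move=> Hs; elim: a => [j|//|b Hb c Hc|i b Hb] /=; rewrite ?Hb ?Hc. Qed.

Lemma subst_diaAll sg a : subst sg (diaAll a) = diaAll (subst sg a).
Proof. by rewrite /diaAll; elim: (enum 'I_n) => //= j e ->. Qed.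

Lemma subst_diaPow sg l a : subst sg (diaPow l a) = diaPow l (subst sg a).
Proof. by rewrite !diaPow_iter; elim: l => //= l <-; rewrite subst_diaAll. Qed.

Lemma subst_diaLe sg l a : subst sg (diaLe l a) = diaLe l (subst sg a).
Proof. by rewrite /diaLe; elim: (iota 0 l.+1) => //= j e ->; rewrite subst_diaPow. Qed.

Lemma subst_boxStar sg l a : subst sg (boxStar l a) = boxStar l (subst sg a).
Proof.
by change (Not (subst sg (diaLe l (Not a))) = Not (diaLe l (Not (subst sg a))));
  rewrite subst_diaLe.
Qed.

Lemma subst_comp sg sg' a : subst sg (subst sg' a) = subst (fun j => subst sg (sg' j)) a.
Proof. by elim: a => //= [b -> c ->|i b ->]. Qed.

Lemma subst_kform_id k a :
  kform k a -> subst (fun j => if kvar k j then Var j else Bot) a = a.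
Proof. by elim: a => //= [j ->|b IHb c IHc /andP[/IHb-> /IHc->]|i b IH /IH->]. Qed.

Lemma subst_Bh_S sg m h : subst sg (@Bh n m h.+1) =
  Imp (sg h.+1) (boxStar m (Or (diaStar m (sg h.+1)) (subst sg (Bh n m h)))).
Proof.
change (Imp (sg h.+1) (subst sg (boxStar m (Or (diaLe m (Var h.+1)) (Bh n m h)))) =
        Imp (sg h.+1) (boxStar m (Or (diaLe m (sg h.+1)) (subst sg (Bh n m h))))).
rewrite subst_boxStar; congr (Imp _ (boxStar _ _)).
by change (Or (subst sg (diaLe m (Var h.+1))) (subst sg (Bh n m h)) =
           Or (diaLe m (sg h.+1)) (subst sg (Bh n m h))); rewrite subst_diaLe.
Qed.

Definition kform_upto (k : option nat) (h : nat) sg := forall j, 0 < j <= h -> kform k (sg j).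

Lemma kform_uptoS k h sg : kform_upto k h.+1 sg -> kform_upto k h sg.
Proof. by move=> Hs j /andP[j_gt0 le_jh]; apply: Hs; rewrite j_gt0 leqW. Qed.

Lemma kform_subst_Bh k sg m h : kform_upto k h sg -> kform k (subst sg (@Bh n m h)).
Proof.
elim: h => [//|h IH] Hs.
rewrite subst_Bh_S kform_Imp kform_boxStar kform_Or /diaStar kform_diaLe.
have -> : kform k (sg h.+1) by apply: Hs; rewrite /= leqnn.
by rewrite IH //; exact: kform_uptoS.
Qed.

Lemma eq_subst_Bh sg sg' m h : (forall j, 0 < j <= h -> sg j = sg' j) ->
  subst sg (@Bh n m h) = subst sg' (Bh n m h).
Proof.
elim: h => [//|h IH] Hs; rewrite !subst_Bh_S Hs /= ?leqnn // IH // => j /andP[j_gt0 j_le].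
by apply: Hs; rewrite j_gt0; exact: leqW.
Qed.

End Modalities.

Section NormalLogic.
Variables (n : nat) (L : form n -> Prop).
Hypothesis HL : normal_logic L.
Implicit Types (a b c : form n) (s : seq (form n)) (v : form n -> bool).

Lemma L_taut a : tautology a -> L a. Proof. by case: HL => H _ _ _ _; exact: H. Qed.
Lemma L_MP a b : L (Imp a b) -> L a -> L b. Proof. by case: HL => _ _ H _ _; exact: H. Qed.
Lemma L_nec i a : L a -> L (Box i a). Proof. by case: HL => _ _ _ H _; exact: H. Qed.
Lemma L_subst sg a : L a -> L (subst sg a). Proof. by case: HL => _ _ _ _ H; exact: H. Qed.

Lemma L_K i a b : L (Imp (Box i (Imp a b)) (Imp (Box i a) (Box i b))).
Proof. by case: HL => _ HK _ _ _; exact: (L_subst (fun j => if j is 0 then a else b) (HK i)). Qed.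

Lemma L_taut_imp a b : (forall v, peval v a -> peval v b) -> L a -> L b.
Proof. by move=> Hab; apply: L_MP; apply: L_taut => v /=; apply/implyP; exact: Hab. Qed.

Lemma L_taut_imp2 a b c :
  (forall v, peval v a -> peval v b -> peval v c) -> L a -> L b -> L c.
Proof.
move=> Habc Ha; apply: L_MP; move: Ha; apply: L_taut_imp => v Ha /=.
by apply/implyP; exact: Habc.
Qed.

Lemma L_box_mono i a b : L (Imp a b) -> L (Imp (Box i a) (Box i b)).
Proof. by move=> Hab; exact: L_MP (L_K i a b) (L_nec i Hab). Qed.

Lemma L_box_mono2 i a b c :
  L (Imp a (Imp b c)) -> L (Imp (Box i a) (Imp (Box i b) (Box i c))).
Proof. by move=> H; apply: L_taut_imp2 (L_box_mono i H) (L_K i b c) => v; peval_cases. Qed.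

Lemma L_box_bigAnd i s : L (Imp (bigAnd (map (Box i) s)) (Box i (bigAnd s))).
Proof.
elim: s => [|b s IH].
  have LTop : L (@Top n) by apply: L_taut.
  by apply: L_taut_imp (L_nec i LTop) => v; peval_cases.
have Lpair : L (Imp b (Imp (bigAnd s) (And b (bigAnd s)))) by apply: L_taut => v; peval_cases.
by apply: L_taut_imp2 IH (L_box_mono2 i Lpair) => v; peval_cases.
Qed.

Lemma L_dia_mono i a b : L (Imp a b) -> L (Imp (Dia i a) (Dia i b)).
Proof.
move=> Hab; have /(L_box_mono i) : L (Imp (Not b) (Not a)).
  by apply: L_taut_imp Hab => v; peval_cases.
by apply: L_taut_imp => v; peval_cases.
Qed.

Lemma L_bigOr_map_mono (I : Type) (f g : I -> form n) (e : seq I) :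
  (forall j, L (Imp (f j) (g j))) -> L (Imp (bigOr (map f e)) (bigOr (map g e))).
Proof.
move=> Hfg; elim: e => [|j e IH]; first by apply: L_taut.
by apply: L_taut_imp2 (Hfg j) IH => v; peval_cases.
Qed.

Lemma L_diaPow_mono l a b : L (Imp a b) -> L (Imp (diaPow l a) (diaPow l b)).
Proof.
rewrite !diaPow_iter; elim: l => //= l IH /IH Hab.
by apply: L_bigOr_map_mono => j; exact: L_dia_mono.
Qed.

Lemma L_pt_at m a : pt_at L m -> L (Imp (diaPow m.+1 a) (diaLe m a)).
Proof.
move/(L_subst (fun=> a)).
change (L (Imp (subst (fun=> a) (diaPow m.+1 (Var 0))) (subst (fun=> a) (diaLe m (Var 0)))) ->
        L (Imp (diaPow m.+1 a) (diaLe m a))).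
by rewrite subst_diaPow subst_diaLe.
Qed.

Lemma L_diaPow_bigAnd_collect l (G : form n -> Prop) t :
  {in t, forall b, exists2 s, {in s, forall a, G a} & b = diaPow l (bigAnd s)} ->
  exists2 s, {in s, forall a, G a} & L (Imp (diaPow l (bigAnd s)) (bigAnd t)).
Proof.
elim: t => [|e t IH] Ht; first by exists [::] => //; apply: L_taut => v; peval_cases.
have [|s Hs Ls] := IH; first by move=> b Hb; apply: Ht; rewrite inE Hb orbT.
have [se Hse ->] := Ht e (mem_head e t).
exists (se ++ s) => [a|]; first by rewrite mem_cat => /orP[/Hse|/Hs].
have sub_l : {subset se <= se ++ s} by move=> a Ha; rewrite mem_cat Ha.
have sub_r : {subset s <= se ++ s} by move=> a Ha; rewrite mem_cat Ha orbT.
have Le := L_diaPow_mono l (L_taut (tautology_bigAnd_sub sub_l)).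
have Lr := L_diaPow_mono l (L_taut (tautology_bigAnd_sub sub_r)).
have Lt : L (Imp (diaPow l (bigAnd (se ++ s))) (bigAnd t)).
  by apply: L_taut_imp2 Lr Ls => v; peval_cases.
by apply: L_taut_imp2 Le Lt => v; peval_cases.
Qed.

End NormalLogic.

Lemma normal_ext n (L : form n -> Prop) B : normal_logic L -> normal_logic (ext L B).
Proof.
case=> Htaut HK _ _ _; split; [|by move=> i; apply: ext_L|exact: ext_MP|exact: ext_Nec|].
- by move=> a /Htaut; apply: ext_L.
- exact: ext_Sub.
Qed.

Lemma LconsistentE n (L : form n -> Prop) (x : form n -> Prop) :
  Lconsistent L x <-> forall s, {in s, forall a, x a} -> ~ L (Not (bigAnd s)).
Proof.
by split=> Hc s Hs; apply: Hc => a Ha; apply: Hs; move: Ha; rewrite inlistE.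
Qed.

Lemma Lconsistent_sub n (L : form n -> Prop) (x y : form n -> Prop) :
  (forall a, x a -> y a) -> Lconsistent L y -> Lconsistent L x.
Proof. by move=> Hxy Hy s Hs; apply: Hy => a /Hs /Hxy. Qed.

Section MaximalConsistent.
Variables (n : nat) (L : form n -> Prop) (k : option nat) (x : form n -> Prop).
Hypotheses (HL : normal_logic L) (Hx : mcs L k x).
Implicit Types (a b : form n) (s t : seq (form n)).

Lemma mcs_kform a : x a -> kform k a.
Proof. by case: Hx => H _ _; exact: H. Qed.

Lemma mcs_consistent s : {in s, forall a, x a} -> ~ L (Not (bigAnd s)).
Proof. by case: Hx => _ /LconsistentE H _; exact: H. Qed.

Lemma mcs_maximal a : kform k a -> ~ x a ->
  exists2 t, {in t, forall b, x b} & L (Imp a (Not (bigAnd t))).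
Proof.
case: Hx => _ _ Hmax Ha Hxa; apply: NNPP => Hno; apply: (Hmax a Ha Hxa).
apply/LconsistentE => u Hu Lu; have [s1 [s2 [Hs1 Hs2 Hsub]]] := seq_union_split Hu.
apply: Hno; exists s1 => //; apply: (L_taut_imp HL _ Lu) => v.
rewrite /= !implybF !peval_bigAnd => Hnu; apply/implyP => Hva; apply: contra Hnu => Hv1.
by apply/allP => b /Hsub; rewrite mem_cat => /orP[/(allP Hv1)|/Hs2->].
Qed.

Lemma mcs_closed s b : {in s, forall a, x a} -> L (Imp (bigAnd s) b) -> kform k b -> x b.
Proof.
move=> Hs Lb Hb; apply: NNPP => Hxb; have [t Ht Lt] := mcs_maximal Hb Hxb.
apply: (@mcs_consistent (s ++ t)) => [a|]; first by rewrite mem_cat => /orP[/Hs|/Ht].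
apply: (L_taut_imp2 HL _ Lb Lt) => v; rewrite /= !implybF !peval_bigAnd all_cat.
by case: (all _ s); case: (all _ t); case: (peval v b).
Qed.

Lemma mcs_L_imp a b : L (Imp a b) -> kform k b -> x a -> x b.
Proof.
move=> Lab Hb Ha; apply: (@mcs_closed [:: a]) => // [c|]; first by rewrite inE => /eqP->.
by apply: (L_taut_imp HL _ Lab) => v; peval_cases.
Qed.

Lemma mcs_L a : L a -> kform k a -> x a.
Proof.
move=> La; apply: (@mcs_closed [::]) => //.
by apply: (L_taut_imp HL _ La) => v; peval_cases.
Qed.

Lemma mcs_contra a : x a -> x (Not a) -> False.
Proof.
move=> Ha Hna; apply: (@mcs_consistent [:: a; Not a]).
  by move=> b; rewrite !inE => /orP[]/eqP->.
by apply: (L_taut HL) => v; peval_cases.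
Qed.

Lemma mcs_Bot : ~ x Bot.
Proof. by move=> HBot; apply: mcs_contra HBot (mcs_L _ _) => //; apply: L_taut. Qed.

Lemma mcs_em a : kform k a -> x a \/ x (Not a).
Proof.
move=> Ha; case: (classic (x a)) => [|Hxa]; [by left|right].
have [t Ht Lt] := mcs_maximal Ha Hxa.
apply: (mcs_closed Ht); last by rewrite kform_Not.
by apply: (L_taut_imp HL _ Lt) => v; peval_cases.
Qed.

Lemma mcs_Not a : kform k a -> x (Not a) <-> ~ x a.
Proof. by move=> Ha; split=> [Hna Hxa|]; [exact: mcs_contra Hxa Hna|case: (mcs_em Ha)]. Qed.

Lemma mcs_MP a b : x (Imp a b) -> x a -> x b.
Proof.
move=> Hab Ha; have /andP[_ Hb] := mcs_kform Hab.
apply: (@mcs_closed [:: Imp a b; a]) => // [c|]; first by rewrite !inE => /orP[]/eqP->.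
by apply: (L_taut HL) => v; peval_cases.
Qed.

Lemma mcs_Imp a b : kform k a -> kform k b -> x (Imp a b) <-> (x a -> x b).
Proof.
move=> Ha Hb; split=> [|Himp]; first exact: mcs_MP.
have Hab : kform k (Imp a b) by rewrite /= Ha Hb.
by case: (mcs_em Ha) => [/Himp|]; apply: (mcs_L_imp _ Hab); apply: (L_taut HL) => v; peval_cases.
Qed.

Lemma mcs_Or a b : kform k a -> kform k b -> x (Or a b) <-> x a \/ x b.
Proof.
move=> Ha Hb; rewrite mcs_Imp ?kform_Not // mcs_Not //.
by split=> [H|[Hxa H //|Hxb _ //]]; case: (classic (x a)); [left|right; exact: H].
Qed.

Lemma mcs_bigOr s : kform k (bigOr s) -> x (bigOr s) <-> exists2 a, a \in s & x a.
Proof.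
elim: s => [|b s IH] Hk; first by split=> [/mcs_Bot|[]].
change (is_true (kform k (Or b (bigOr s)))) in Hk; move: Hk; rewrite kform_Or => /andP[Hb Hs].
change (x (Or b (bigOr s)) <-> exists2 a, a \in (b :: s) & x a); rewrite mcs_Or // IH //.
split=> [[Hxb|[a Ha Hxa]]|[a]]; first by exists b; rewrite ?mem_head.
  by exists a; rewrite // inE Ha orbT.
by rewrite inE => /orP[/eqP->|Ha Hxa]; [left|right; exists a].
Qed.

Lemma mcs_bigAnd s : kform k (bigAnd s) -> x (bigAnd s) <-> {in s, forall a, x a}.
Proof.
move=> Hs; split=> [Hxs a Has|Hin]; last first.
  by apply: (mcs_closed Hin) => //; apply: (L_taut HL) => v; peval_cases.
apply: mcs_L_imp Hxs; last by move: Hs; rewrite kform_bigAnd => /allP; exact.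
apply: (L_taut HL) => v; rewrite /= implybE peval_bigAnd.
by case Hv: (all _ s); rewrite ?orbT //= (allP Hv).
Qed.

Lemma mcs_diaAll a : kform k a -> x (diaAll a) <-> exists i, x (Dia i a).
Proof.
move=> Ha; rewrite mcs_bigOr ?kform_diaAll //.
split=> [[_ /mapP[i _ ->]]|[i Hi]]; first by exists i.
by exists (Dia i a) => //; apply/mapP; exists i; rewrite ?mem_enum.
Qed.

Lemma mcs_diaLe m a : kform k a -> x (diaLe m a) <-> exists2 i, i <= m & x (diaPow i a).
Proof.
move=> Ha; rewrite mcs_bigOr ?kform_diaLe //.
split=> [[_ /mapP[i Hi ->]]|[i Hi Hxi]]; first by exists i; rewrite // mem_iota ltnS in Hi.
by exists (diaPow i a) => //; apply/mapP; exists i; rewrite ?mem_iota ?ltnS.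
Qed.

Lemma mcs_diaPow_diaLe m a l : pt_at L m -> kform k a -> x (diaPow l a) -> x (diaLe m a).
Proof.
move=> Hpt Ha; elim: l {-2}l (leqnn l) => [|N IH] l le_lN Hl.
  by move: le_lN Hl; rewrite leqn0 => /eqP-> H0; apply/(mcs_diaLe _ Ha); exists 0.
have [le_lm|lt_ml] := leqP l m; first by apply/(mcs_diaLe _ Ha); exists l.
move: Hl; rewrite -(subnKC lt_ml) diaPow_add => Hl.
have Hr : kform k (diaPow (l - m.+1) a) by exact: kform_diaPow.
have /(mcs_diaLe _ Hr) [i le_im] : x (diaLe m (diaPow (l - m.+1) a)).
  by apply: mcs_L_imp Hl; [exact: L_pt_at|rewrite kform_diaLe].
by rewrite -diaPow_add; apply: IH; lia.
Qed.

(* If every [i \in J] had a finite [s_i] with [f i (bigAnd s_i)] outside [x], then by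
   monotonicity the concatenation of all the [s_i] would refute every [i] at once. *)
Lemma mcs_uniform_witness (I : eqType) (J : seq I) (f : I -> form n -> form n)
    (G : form n -> Prop) :
  (forall i a b, L (Imp a b) -> L (Imp (f i a) (f i b))) ->
  (forall i a, kform k a -> kform k (f i a)) -> (forall a, G a -> kform k a) ->
  (forall s, {in s, forall a, G a} -> exists2 i, i \in J & x (f i (bigAnd s))) ->
  exists2 i, i \in J & forall s, {in s, forall a, G a} -> x (f i (bigAnd s)).
Proof.
move=> f_mono f_kform HGk Hwit; apply: NNPP => Hno.
have weaken i s t : {in s, forall a, G a} -> {subset s <= t} ->
    x (f i (bigAnd t)) -> x (f i (bigAnd s)).
  move=> Hs st; apply: mcs_L_imp; first by apply/f_mono/(L_taut HL); exact: tautology_bigAnd_sub.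
  by apply: f_kform; rewrite kform_bigAnd; apply/allP => a /Hs/HGk.
suff [s Hs Hns] : exists2 s, {in s, forall a, G a} & forall i, i \in J -> ~ x (f i (bigAnd s)).
  by have [i /Hns] := Hwit s Hs.
suff gen (J' : seq I) : {subset J' <= J} ->
    exists2 s, {in s, forall a, G a} & forall i, i \in J' -> ~ x (f i (bigAnd s)).
  exact: gen.
elim: J' => [|i J' IH] JJ'; first by exists [::].
have [|s Hs Hns] := IH; first by move=> j Hj; apply: JJ'; rewrite inE Hj orbT.
have [t Ht Hnt] : exists2 t, {in t, forall a, G a} & ~ x (f i (bigAnd t)).
  apply: NNPP => Hc; apply: Hno; exists i; first by apply: JJ'; exact: mem_head.
  by move=> t Ht; apply: NNPP => Hnt; apply: Hc; exists t.
have Hts : {in t ++ s, forall a, G a} by move=> a; rewrite mem_cat => /orP[/Ht|/Hs].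
exists (t ++ s) => // j; rewrite inE => /orP[/eqP->|/Hns Hj] Hxj.
  by apply/Hnt/(weaken _ _ _ Ht _ Hxj) => a Ha; rewrite mem_cat Ha.
by apply/Hj/(weaken _ _ _ Hs _ Hxj) => a Ha; rewrite mem_cat Ha orbT.
Qed.

End MaximalConsistent.

Lemma mcs_ext_mcs n (L : form n -> Prop) k B x :
  normal_logic L -> mcs (ext L B) k x -> mcs L k x.
Proof.
move=> HL Hx; have HLB := normal_ext B HL; split; first exact: mcs_kform Hx.
  by apply/LconsistentE => s Hs Ls; apply: (mcs_consistent Hx Hs); exact: ext_L.
move=> a Ha Hxa /LconsistentE Hc; have [//|Hna] := mcs_em HLB Hx Ha.
apply: (Hc [:: Not a; a]); first by move=> b; rewrite !inE => /orP[]/eqP->; [left|right].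
by apply: (L_taut HL) => v; peval_cases.
Qed.

Section Lindenbaum.
Variables (n : nat) (L : form n -> Prop) (k : option nat) (G : form n -> Prop).
Hypotheses (HG : Lconsistent L G) (HGk : forall a, G a -> kform k a).

Definition enum_form (j : nat) : form n := odflt Bot (unpickle j).

Fixpoint lindenbaum_chain (i : nat) : form n -> Prop :=
  if i is i'.+1 then fun b => lindenbaum_chain i' b \/
    [/\ b = enum_form i', kform k b & Lconsistent L (fun c => lindenbaum_chain i' c \/ c = b)]
  else G.

Lemma lindenbaum_chain_mono i j a : i <= j -> lindenbaum_chain i a -> lindenbaum_chain j a.
Proof. by move/subnK <-; elim: (j - i) => // d IH /IH; left. Qed.

Lemma lindenbaum_chain_consistent i : Lconsistent L (lindenbaum_chain i).
Proof.
elim: i => //= i IH; set b := enum_form i.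
case: (classic (kform k b /\ Lconsistent L (fun c => lindenbaum_chain i c \/ c = b))).
  by case=> _; apply: Lconsistent_sub => a [|[->]]; [left|right].
by move=> Hno; apply: Lconsistent_sub IH => a [//|[-> Hb Hc]]; case: Hno.
Qed.

Lemma lindenbaum : exists2 x, mcs L k x & forall a, G a -> x a.
Proof.
exists (fun a => exists i, lindenbaum_chain i a); last by move=> a Ha; exists 0.
split.
- move=> a [i]; elim: i a => [|i IH] a /=; [exact: HGk|by case=> [/IH|[->]]].
- apply/LconsistentE => s Hs.
  have [i Hi] : exists i, {in s, forall a, lindenbaum_chain i a}.
    elim: s Hs => [|b s IH] Hs; first by exists 0.
    have [|i Hi] := IH; first by move=> a Ha; apply: Hs; rewrite inE Ha orbT.
    have [j Hj] := Hs b (mem_head b s).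
    exists (maxn i j) => a; rewrite inE => /orP[/eqP->|/Hi].
      by apply: lindenbaum_chain_mono Hj; rewrite leq_maxr.
    by apply: lindenbaum_chain_mono; rewrite leq_maxl.
  by move: (@lindenbaum_chain_consistent i) => /LconsistentE; apply.
- move=> a Ha Hna Hc; apply: Hna; exists (pickle a).+1; right.
  rewrite /enum_form pickleK; split=> //.
  by apply: Lconsistent_sub Hc => c [Hc|->]; [left; exists (pickle a)|right].
Qed.

End Lindenbaum.

Lemma rtc_trans T (R : T -> T -> Prop) x y z : rtc R x y -> rtc R y z -> rtc R x z.
Proof. by elim=> // a b c Hab _ IH /IH; apply: rtc_step Hab. Qed.

Lemma sig_eq T (P : T -> Prop) (a b : {w | P w}) : sval a = sval b -> a = b.
Proof. by case: a b => a Pa [b Pb] /= Eab; subst b; rewrite (proof_irrelevance _ Pa Pb). Qed.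

Lemma ex_maxn_le (P : nat -> Prop) h : P 0 ->
  exists j, [/\ j <= h, P j & forall j', j < j' <= h -> ~ P j'].
Proof.
move=> P0; elim: h => [|h [j [Hjh Pj Hmax]]].
  by exists 0; split=> // j' /andP[j'_gt0]; rewrite leqNgt j'_gt0.
case: (classic (P h.+1)) => [Ph|NPh].
  by exists h.+1; split=> // j' /andP[lt_hj']; rewrite leqNgt lt_hj'.
exists j; split=> [||j' /andP[lt_jj']]; [exact: leqW|by []|].
by rewrite leq_eqVlt => /orP[/eqP->//|]; rewrite ltnS => le_j'h; apply: Hmax; rewrite lt_jj'.
Qed.

Lemma ord_chain_min T (le : T -> T -> Prop) : (forall a b c, le a b -> le b c -> le a c) ->
  forall N (g : 'I_N.+1 -> T), (forall i j, le (g i) (g j) \/ le (g j) (g i)) ->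
  exists i0, forall i, le (g i0) (g i).
Proof.
move=> le_trans; elim=> [|N IH] g Hg.
  by exists ord0 => i; rewrite (ord1 i); case: (Hg ord0 ord0).
have [i1 Hi1] := IH (fun t => g (lift ord0 t)) (fun i j => Hg _ _).
case: (Hg ord0 (lift ord0 i1)) => H.
  exists ord0 => i; case: (unliftP ord0 i) => [j ->|->]; first exact: le_trans H (Hi1 j).
  by case: (Hg ord0 ord0).
by exists (lift ord0 i1) => i; case: (unliftP ord0 i) => [j ->|->].
Qed.

Section Frames.
Variables (n : nat) (F : frame n).
Implicit Types (x y z : fW F).

Lemma Rstar_refl x : Rstar x x. Proof. exact: rtc_refl. Qed.

Lemma Rstar_trans x y z : Rstar x y -> Rstar y z -> Rstar x z.
Proof. exact: rtc_trans. Qed.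

Lemma Rstar1 i x y : fR F i x y -> Rstar x y.
Proof. by move=> Hxy; apply: rtc_step (Rstar_refl y); exists i. Qed.

Fixpoint rpath (l : nat) x y : Prop :=
  if l is l'.+1 then exists i z, fR F i x z /\ rpath l' z y else x = y.

Lemma rpath_Rstar l x y : rpath l x y -> Rstar x y.
Proof.
elim: l x => [|l IH] x /=; first by move->; exact: Rstar_refl.
by move=> [i [z [Hxz /IH]]]; apply: Rstar_trans; exact: Rstar1 Hxz.
Qed.

Lemma Rstar_rpath x y : Rstar x y -> exists l, rpath l x y.
Proof. by elim=> [z|x' y' z [i Hi] _ [l Hl]]; [exists 0|exists l.+1, i, y']. Qed.

Fixpoint proper_ascent x (l : nat) : Prop :=
  if l is l'.+1 then exists y, [/\ Rstar x y, ~ Rstar y x & proper_ascent y l'] else True.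

Lemma proper_ascent_le x l l' : l' <= l -> proper_ascent x l -> proper_ascent x l'.
Proof.
elim: l x l' => [|l IH] x [|l'] //= le_l'l [y [Hxy Hyx Hy]].
by exists y; split=> //; exact: IH Hy.
Qed.

Lemma proper_ascent_Rstar x y l : Rstar x y -> proper_ascent y l -> proper_ascent x l.
Proof.
case: l => [//|l] Hxy [z [Hyz Hzy Hz]]; exists z; split=> //; first exact: Rstar_trans Hyz.
by move=> Hzx; apply: Hzy; exact: Rstar_trans Hxy.
Qed.

Lemma cluster_of_eq x y : Rstar x y -> Rstar y x -> cluster_of x = cluster_of y.
Proof.
move=> Hxy Hyx; apply: functional_extensionality => z.
apply: propositional_extensionality; split=> -[Hz1 Hz2]; split.
- exact: Rstar_trans Hyx Hz1.
- exact: Rstar_trans Hz2 Hxy.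
- exact: Rstar_trans Hxy Hz1.
- exact: Rstar_trans Hz2 Hyx.
Qed.

Lemma skeleton_rep (C : skeleton F) : exists c, sval C = cluster_of c.
Proof. by case: C => C [c E]; exists c. Qed.

Lemma skel_leE (C D : skeleton F) c d : sval C = cluster_of c -> sval D = cluster_of d ->
  skel_le C D <-> Rstar c d.
Proof.
rewrite /skel_le => -> ->; split=> [[a [b [[Hca _] [[_ Hbd] Hab]]]]|Hcd].
  exact: Rstar_trans Hca (Rstar_trans Hab Hbd).
by exists c, d; do !split=> //; exact: Rstar_refl.
Qed.

Lemma skel_le_trans (C D E : skeleton F) : skel_le C D -> skel_le D E -> skel_le C E.
Proof.
have [c Hc] := skeleton_rep C; have [d Hd] := skeleton_rep D; have [e He] := skeleton_rep E.
rewrite (skel_leE Hc Hd) (skel_leE Hd He) (skel_leE Hc He); exact: Rstar_trans.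
Qed.

Definition cluster_pt x : skeleton F := exist _ (cluster_of x) (ex_intro _ x erefl).

Lemma skel_le_cluster_pt x y : skel_le (cluster_pt x) (cluster_pt y) <-> Rstar x y.
Proof. exact: skel_leE. Qed.

Lemma proper_ascent_seq x l : proper_ascent x l -> exists p : nat -> fW F,
  p 0 = x /\ forall t, t < l -> Rstar (p t) (p t.+1) /\ ~ Rstar (p t.+1) (p t).
Proof.
elim: l x => [|l IH] x /=; first by exists (fun=> x).
move=> [y [Hxy Hyx /IH [p [Ep0 Hp]]]].
exists (fun t => if t is t'.+1 then p t' else x); split=> // -[|t] Ht /=; last exact: Hp.
by rewrite Ep0.
Qed.

Lemma proper_ascent_chain x l : proper_ascent x l -> has_chain (@skel_le n F) l.+1.
Proof.
move=> /proper_ascent_seq [p [_ Hp]].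
have Hle s t : s <= t -> t <= l -> Rstar (p s) (p t).
  elim: t => [|t IH]; first by rewrite leqn0 => /eqP-> _; exact: Rstar_refl.
  rewrite leq_eqVlt ltnS => /orP[/eqP-> _|le_st lt_tl]; first exact: Rstar_refl.
  exact: Rstar_trans (IH le_st (ltnW lt_tl)) (proj1 (Hp t lt_tl)).
have Hlt s t : s < t -> t <= l -> ~ Rstar (p t) (p s).
  case: t => [//|t] lt_st lt_tl Hts; apply: (proj2 (Hp t lt_tl)).
  exact: Rstar_trans Hts (Hle s t lt_st (ltnW lt_tl)).
exists (fun i : 'I_l.+1 => cluster_pt (p i)); split=> [i j /(f_equal sval) /= Eij|i j].
  have [Hij Hji] : cluster_of (p i) (p j) by rewrite Eij; split; exact: Rstar_refl.
  apply: val_inj; case: (ltngtP i j) => // [lt_ij|lt_ji].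
    by case: (Hlt _ _ lt_ij (ltnSE (ltn_ord j)) Hji).
  by case: (Hlt _ _ lt_ji (ltnSE (ltn_ord i)) Hij).
case: (leqP i j) => [le_ij|lt_ji]; [left|right]; apply/skel_le_cluster_pt.
  exact: Hle le_ij (ltnSE (ltn_ord j)).
exact: Hle (ltnW lt_ji) (ltnSE (ltn_ord i)).
Qed.

Lemma chain_proper_ascent l : has_chain (@skel_le n F) l.+1 -> exists x, proper_ascent x l.
Proof.
suff Hc (f : 'I_l.+1 -> skeleton F) : injective f ->
    (forall i j, skel_le (f i) (f j) \/ skel_le (f j) (f i)) ->
    exists x t, sval (f t) = cluster_of x /\ proper_ascent x l.
  by case=> f [/Hc Hf /Hf [x [_ [_ Hx]]]]; exists x.
elim: l f => [|l IH] f f_inj f_chain.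
  by have [c Hc] := skeleton_rep (f ord0); exists c, ord0.
have [i0 Hi0] := ord_chain_min (@skel_le_trans) f_chain.
have [y [t [Ht Hy]]] := IH (fun t => f (lift i0 t))
  (fun u v E => lift_inj (f_inj _ _ E)) (fun u v => f_chain _ _).
have [x Hx] := skeleton_rep (f i0).
have Hxy : Rstar x y by apply/(skel_leE Hx Ht).
exists x, i0; split=> //; exists y; split=> // Hyx.
suff /f_inj/eqP : f i0 = f (lift i0 t) by rewrite (negbTE (neq_lift i0 t)).
by apply: sig_eq; rewrite Hx Ht; exact: cluster_of_eq.
Qed.

End Frames.

Section Depth.
Variables (n : nat) (F : frame n) (x : fW F).

Local Notation Fx := (restrict (Rstar x)).

Lemma Rstar_restrict (a b : fW Fx) : Rstar a b <-> Rstar (sval a) (sval b).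
Proof.
split=> [|Hab].
  by elim=> [c|c d e [i Hi] _ IH]; [exact: Rstar_refl|exact: Rstar_trans (@Rstar1 n F i _ _ Hi) IH].
case: a b Hab => a Ha [b Hb] /= Hab; elim: Hab Ha Hb => [c|c d e [i Hcd] _ IH] Hc He.
  by rewrite (proof_irrelevance _ Hc He); exact: Rstar_refl.
have Hd : Rstar x d by exact: Rstar_trans Hc (Rstar1 Hcd).
by apply: rtc_step (IH Hd He); exists i.
Qed.

Lemma proper_ascent_restrict l (a : fW Fx) : proper_ascent a l <-> proper_ascent (sval a) l.
Proof.
elim: l a => [//|l IH] a /=; split=> [[b [Hab Hba Hb]]|[y [Hay Hya Hy]]].
  by exists (sval b); split; [exact/Rstar_restrict|move/Rstar_restrict|exact/IH].
have Hy' : Rstar x y by exact: Rstar_trans (svalP a) Hay.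
by exists (exist _ y Hy'); split; [exact/Rstar_restrict|move/Rstar_restrict|exact/IH].
Qed.

Lemma depth_leP h : depth_le x h <-> ~ proper_ascent x h.
Proof.
pose x' : fW Fx := exist _ x (Rstar_refl x).
split=> [[h' [le_h'h [_ Hno]]] Hx|Hx].
  apply: (Hno h.+1); first by rewrite ltnS.
  by apply: (@proper_ascent_chain _ _ x'); exact/proper_ascent_restrict.
have Hno j : h < j -> ~ has_chain (@skel_le n Fx) j.
  case: j => [//|j] lt_hj /chain_proper_ascent [a /proper_ascent_restrict Ha].
  by apply: Hx; apply: proper_ascent_Rstar (svalP a) (proper_ascent_le _ Ha); rewrite -ltnS.
have H0 : has_chain (@skel_le n Fx) 0 by exists (fun=> cluster_pt x'); split; case.
have [j [le_jh Hj Hmax]] := ex_maxn_le h H0.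
exists j; split=> //; split=> // j' lt_jj'; case: (leqP j' h) => [le_j'h|]; last exact: Hno.
by apply: Hmax; rewrite lt_jj'.
Qed.

End Depth.

Section CanonicalFrame.
Variables (n : nat) (L : form n -> Prop) (k : option nat).
Hypothesis HL : normal_logic L.
Implicit Types (a b : form n) (s t : seq (form n)).

Local Notation point := (fW (canon L k)).
Local Notation R := (fR (canon L k)).

Lemma point_mcs (y : point) : mcs L k (sval y). Proof. exact: svalP. Qed.

Lemma canon_dia i (y z : point) a : R i y z -> sval z a -> sval y (Dia i a).
Proof. by move=> Ryz Ha; exact: Ryz (mcs_kform (point_mcs z) Ha) Ha. Qed.

Lemma canon_point_eq (y z : point) : (forall a, sval y a -> sval z a) -> y = z.
Proof.
move=> yz; apply: sig_eq; apply: functional_extensionality => a.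
apply: propositional_extensionality; split=> [/yz//|Hza]; apply: NNPP => Hya.
have /(mcs_em HL (point_mcs y)) [//|/yz] := mcs_kform (point_mcs z) Hza.
exact: mcs_contra HL (point_mcs z) _ Hza.
Qed.

(* The successor is a Lindenbaum extension of [D] together with everything boxed at [y]. *)
Lemma canon_succ i (y : point) (D : form n -> Prop) : (forall a, D a -> kform k a) ->
  (forall t, {in t, forall a, D a} -> exists2 d, sval y (Dia i d) & L (Imp d (bigAnd t))) ->
  exists2 z : point, (forall a, D a -> sval z a) & R i y z.
Proof.
move=> HDk HD; have Hy := point_mcs y.
pose G b := sval y (Box i b) \/ D b.
have HGk a : G a -> kform k a by case=> [/(mcs_kform Hy)|/HDk].
have HG : Lconsistent L G.
  apply/LconsistentE => u /seq_union_split [u0 [u1 [Hu0 Hu1 Hsub]]] Lu.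
  have [d Hd Ldu1] := HD u1 Hu1.
  have Lu0 : L (Imp (bigAnd u0) (Not d)).
    apply: (L_taut_imp2 HL _ Lu Ldu1) => v.
    rewrite /= !implybF !peval_bigAnd => /negP Hnu /implyP Hdu.
    apply/implyP => /allP H0; apply/negP => /Hdu /allP H1; apply: Hnu.
    by apply/allP => a /Hsub; rewrite mem_cat => /orP[/H0|/H1].
  have Hbox : sval y (Box i (Not d)).
    apply: (mcs_closed HL Hy (s := map (Box i) u0)) => [_ /mapP[a /Hu0 Ha ->]//||].
      by apply: (L_taut_imp2 HL _ (L_box_bigAnd HL i u0) (L_box_mono HL i Lu0)) => v; peval_cases.
    by move: (mcs_kform Hy Hd); rewrite kform_Dia /= => ->.
  exact: (mcs_contra HL Hy Hbox Hd).
have [z Hz HGz] := lindenbaum HG HGk.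
exists (exist _ z Hz) => [a Ha|psi Hpsi Hzpsi /=]; first by apply: HGz; right.
have /(mcs_em HL Hy) [//|Hn] : kform k (Dia i psi) by rewrite kform_Dia.
have /(HGz _) Hz' : G (Not psi).
  left; apply: (mcs_L_imp HL Hy _ _ Hn); last by rewrite /= Hpsi.
  by apply: (L_taut HL) => v; peval_cases.
by case: (mcs_contra HL Hz Hzpsi Hz').
Qed.

Lemma canon_dia_succ i (y : point) a : sval y (Dia i a) -> exists2 z : point, sval z a & R i y z.
Proof.
move=> Hya; have Ha : kform k a by move: (mcs_kform (point_mcs y) Hya); rewrite kform_Dia.
have Hwit t : {in t, forall b, b = a} -> exists2 d, sval y (Dia i d) & L (Imp d (bigAnd t)).
  move=> Ht; exists a => //; apply: (L_taut HL) => v /=; rewrite peval_bigAnd.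
  by apply/implyP => Hv; apply/allP => b /Ht->.
have [|z Hz Ryz] := canon_succ _ Hwit; first by move=> b ->.
by exists z; first exact: Hz.
Qed.

Lemma rpath_diaPow l (y z : point) a : rpath l y z -> sval z a -> sval y (diaPow l a).
Proof.
elim: l y => [|l IH] y; first by move=> /= ->.
move=> [i [y' [Ryy' Hy'z]]] /(IH _ Hy'z) Hy'; rewrite diaPow_S.
apply/(mcs_diaAll HL (point_mcs y) (mcs_kform (point_mcs y') Hy')); exists i.
exact: canon_dia Ryy' Hy'.
Qed.

Lemma canon_rpath_exists (G : form n -> Prop) l (y : point) : (forall a, G a -> kform k a) ->
  (forall s, {in s, forall a, G a} -> sval y (diaPow l (bigAnd s))) ->
  exists2 z : point, (forall a, G a -> sval z a) & rpath l y z.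
Proof.
move=> HGk; have HGs s : {in s, forall a, G a} -> kform k (bigAnd s).
  by move=> Hs; rewrite kform_bigAnd; apply/allP => a /Hs/HGk.
elim: l y => [|l IH] y Hy.
  exists y => // a Ga; have Hs : {in [:: a], forall b, G b} by move=> b /[1!inE] /eqP->.
  by move/(mcs_bigAnd HL (point_mcs y) (HGs _ Hs)): (Hy _ Hs); apply; rewrite mem_head.
have [i _ Hi] : exists2 i, i \in enum 'I_n &
    forall s, {in s, forall a, G a} -> sval y (Dia i (diaPow l (bigAnd s))).
  apply: (mcs_uniform_witness HL (point_mcs y) (f := fun i a => Dia i (diaPow l a))) => //.
  - by move=> i a b /(L_diaPow_mono HL l); exact: L_dia_mono.
  - by move=> i a Ha; rewrite kform_Dia kform_diaPow.
  - move=> s Hs; have := Hy s Hs; rewrite diaPow_S.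
    case/(mcs_diaAll HL (point_mcs y) (kform_diaPow _ (HGs _ Hs))) => j Hj.
    by exists j; rewrite ?mem_enum.
pose D b := exists2 s, {in s, forall a, G a} & b = diaPow l (bigAnd s).
have [z HDz Ryz] : exists2 z : point, (forall a, D a -> sval z a) & R i y z.
  apply: canon_succ => [_ [s /HGs Hs ->]|t Ht]; first exact: kform_diaPow.
  by have [s /Hi Hs Ls] := L_diaPow_bigAnd_collect HL Ht; exists (diaPow l (bigAnd s)).
have [w Hw Hzw] := IH z (fun s Hs => HDz _ (ex_intro2 _ _ s Hs erefl)).
by exists w => //; exists i, z.
Qed.

Section Pretransitive.
Variable m : nat.
Hypothesis Hpt : pt_at L m.

Lemma diaStar_intro (y z : point) a : Rstar y z -> sval z a -> sval y (diaStar m a).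
Proof.
case/Rstar_rpath => l Hl Ha.
exact: (mcs_diaPow_diaLe HL (point_mcs y) Hpt (mcs_kform (point_mcs z) Ha) (rpath_diaPow Hl Ha)).
Qed.

Lemma diaStar_elim (y : point) a : sval y (diaStar m a) -> exists2 z : point, Rstar y z & sval z a.
Proof.
move=> Hya; have Ha : kform k a by move: (mcs_kform (point_mcs y) Hya); rewrite kform_diaLe.
have [i _ Hi] := (mcs_diaLe HL (point_mcs y) m Ha).1 Hya.
have Hpre s : {in s, forall b, b = a} -> sval y (diaPow i (bigAnd s)).
  move=> Hs; apply: (mcs_L_imp HL (point_mcs y) _ _ Hi); last first.
    by apply: kform_diaPow; rewrite kform_bigAnd; apply/allP => b /Hs->.
  apply: (L_diaPow_mono HL); apply: (L_taut HL) => v /=; rewrite peval_bigAnd.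
  by apply/implyP => Hv; apply/allP => b /Hs->.
have [|z Hz Hyz] := canon_rpath_exists _ Hpre; first by move=> b ->.
by exists z; [exact: rpath_Rstar Hyz|exact: Hz].
Qed.

(* Otherwise each finite conjunction of [x] lies in [Dia^i] at [y] for some [i <= m]; one
   such [i] serves them all, and a path of length [i] from [y] reaches a point containing,
   hence equal to, [x]. *)
Lemma diaStar_sep (x y : point) :
  ~ Rstar y x -> exists2 chi, sval x chi & ~ sval y (diaStar m chi).
Proof.
move=> Nyx; apply: NNPP => Hno; apply: Nyx.
have Hx := point_mcs x; have Hy := point_mcs y.
have Hks s : {in s, forall a, sval x a} -> kform k (bigAnd s).
  by move=> Hs; rewrite kform_bigAnd; apply/allP => a /Hs/(mcs_kform Hx).
have [i _ Hi] : exists2 i, i \in iota 0 m.+1 &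
    forall s, {in s, forall a, sval x a} -> sval y (diaPow i (bigAnd s)).
  apply: (mcs_uniform_witness HL Hy (f := @diaPow n)) => [i a b|i a|a|s Hs].
  - exact: L_diaPow_mono.
  - exact: kform_diaPow.
  - exact: (mcs_kform Hx).
  have Hxs : sval x (bigAnd s) by apply/(mcs_bigAnd HL Hx (Hks _ Hs)).
  have /(mcs_diaLe HL Hy m (Hks _ Hs)) [i le_im Hyi] : sval y (diaStar m (bigAnd s)).
    by apply: NNPP => Hn; apply: Hno; exists (bigAnd s).
  by exists i; rewrite // mem_iota ltnS.
have [w Hw Hyw] := canon_rpath_exists (mcs_kform Hx) Hi.
by rewrite (canon_point_eq Hw); exact: rpath_Rstar Hyw.
Qed.

Lemma Bh_refuted_ascent h (x : point) psi : kform_upto k h psi ->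
  ~ sval x (subst psi (Bh n m h)) -> proper_ascent x h.
Proof.
elim: h x psi => [//|h IH] x psi Hpsi; have Hx := point_mcs x.
set p := psi h.+1; set c := Or (diaStar m p) (subst psi (Bh n m h)).
have Kp : kform k p by apply: Hpsi; rewrite /= leqnn.
have KB : kform k (subst psi (Bh n m h)) by apply/kform_subst_Bh/kform_uptoS.
have KD : kform k (diaStar m p) by rewrite kform_diaLe.
have Kc : kform k c by rewrite kform_Or KD KB.
rewrite subst_Bh_S -/p -/c (mcs_Imp HL Hx Kp); last by rewrite kform_boxStar.
move=> Hn; have Hxp : sval x p by apply: NNPP => Hxp; apply: Hn.
have /diaStar_elim [z Hxz] : sval x (diaStar m (Not c)).
  have /(mcs_em HL Hx) [//|Hbox] : kform k (diaStar m (Not c)) by rewrite kform_diaLe kform_Not.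
  by case: Hn.
rewrite (mcs_Not HL (point_mcs z) Kc) (mcs_Or HL (point_mcs z) KD KB) => Hz.
exists z; split=> // [Hzx|]; first by apply: Hz; left; exact: diaStar_intro Hzx Hxp.
by apply: (IH z psi (kform_uptoS Hpsi)) => HzB; apply: Hz; right.
Qed.

(* For a step [x R* z] of the ascent, substituting for [p_{h+1}] a formula of [x] whose
   [Dia^*] fails at [z] turns a refutation of [B_h] at [z] into one of [B_{h+1}] at [x]. *)
Lemma ascent_Bh_refuted h (x : point) : proper_ascent x h ->
  exists2 psi, kform_upto k h psi & ~ sval x (subst psi (Bh n m h)).
Proof.
elim: h x => [|h IH] x; first by exists (fun=> Bot) => //; exact: (mcs_Bot HL (point_mcs x)).
move=> [z [Hxz Nzx /IH [psi Hpsi HzB]]]; have [chi Hchi Hzchi] := diaStar_sep Nzx.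
pose psi' j := if j == h.+1 then chi else psi j.
have Hpsi' : kform_upto k h.+1 psi'.
  move=> j /andP[j_gt0]; rewrite /psi' leq_eqVlt; case: eqP => [_ _|_ /= le_jh].
    exact: (mcs_kform (point_mcs x) Hchi).
  by apply: Hpsi; rewrite j_gt0.
exists psi' => //; rewrite subst_Bh_S /psi' eqxx.
rewrite (@eq_subst_Bh _ _ psi) => [Himp|j /andP[_ le_jh]]; last by rewrite ltn_eqF.
have KB : kform k (subst psi (Bh n m h)) by exact: kform_subst_Bh.
have KD : kform k (diaStar m chi) by rewrite kform_diaLe; exact: (mcs_kform (point_mcs x) Hchi).
have Hbox := mcs_MP HL (point_mcs x) Himp Hchi.
have Kc : kform k (Or (diaStar m chi) (subst psi (Bh n m h))) by rewrite kform_Or KD KB.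
have Hzc : sval z (Not (Or (diaStar m chi) (subst psi (Bh n m h)))).
  by apply/(mcs_Not HL (point_mcs z) Kc); rewrite (mcs_Or HL (point_mcs z) KD KB); case.
exact: (mcs_contra HL (point_mcs x) (diaStar_intro Hxz Hzc) Hbox).
Qed.

Lemma canon_depth_leP (x : point) h :
  depth_le x h <-> forall psi, kform_upto k h psi -> sval x (subst psi (Bh n m h)).
Proof.
rewrite depth_leP; split=> [Nasc psi Hpsi|HB /ascent_Bh_refuted [psi /HB//]].
by apply: NNPP => /(Bh_refuted_ascent Hpsi).
Qed.

Lemma ext_Bh_valid_shallow h phi : ext L (Bh n m h) phi ->
  forall sigma, (forall j, kform k (sigma j)) ->
  forall y : point, ~ proper_ascent y h -> sval y (subst sigma phi).
Proof.
elim=> [a La| |a b _ IHab _ IHa|i a _ IH|sg a _ IH] sigma Hsigma y Nasc.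
- exact: (mcs_L HL (point_mcs y) (L_subst HL sigma La) (kform_subst _ Hsigma)).
- by move/depth_leP/canon_depth_leP: Nasc; apply=> j _; exact: Hsigma.
- exact: (mcs_MP HL (point_mcs y) (IHab _ Hsigma _ Nasc) (IHa _ Hsigma _ Nasc)).
- have Ka : kform k (subst sigma a) by exact: kform_subst.
  apply: NNPP => Nbox.
  have /canon_dia_succ [z Hz Ryz] : sval y (Dia i (Not (subst sigma a))).
    have /(mcs_em HL (point_mcs y)) [//|Hn] : kform k (Dia i (Not (subst sigma a))).
      by rewrite kform_Dia kform_Not.
    case: Nbox; apply: (mcs_L_imp HL (point_mcs y) _ _ Hn) => //.
    have Ldn : L (Imp (Not (Not (subst sigma a))) (subst sigma a)).
      by apply: (L_taut HL) => v; peval_cases.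
    by apply: (L_taut_imp HL _ (L_box_mono HL i Ldn)) => v; peval_cases.
  have Nascz : ~ proper_ascent z h by move/(proper_ascent_Rstar (Rstar1 Ryz)).
  exact: (mcs_contra HL (point_mcs z) (IH _ Hsigma _ Nascz) Hz).
- by rewrite subst_comp; apply: IH => // j; exact: kform_subst.
Qed.

Lemma canon_shallow_mcs_ext h (y : point) :
  ~ proper_ascent y h -> mcs (ext L (Bh n m h)) k (sval y).
Proof.
move=> Nasc; have Hy := point_mcs y; split; first exact: mcs_kform Hy.
- apply/LconsistentE => t Ht /ext_Bh_valid_shallow Hext.
  pose id_k j := if kvar k j then @Var n j else Bot.
  have Hid j : kform k (id_k j) by rewrite /id_k; case: ifP.
  have Kt : kform k (bigAnd t) by rewrite kform_bigAnd; apply/allP => a /Ht/(mcs_kform Hy).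
  move: (Hext id_k Hid y Nasc); rewrite subst_kform_id ?kform_Not //.
  by apply/(mcs_contra HL Hy)/(mcs_bigAnd HL Hy Kt).
- case: Hy => _ _ Hmax a Ka Nya Hc; apply: (Hmax a Ka Nya) => s Hs Ls.
  by apply: (Hc s Hs); exact: ext_L.
Qed.

End Pretransitive.

End CanonicalFrame.

Theorem proposition3p4 (n : nat) (L : form n -> Prop) (k : option nat) (m : nat) :
  normal_logic L -> consistent_logic L -> pretransitive L -> least_pt L m ->
  (forall (x : fW (canon L k)) (h : nat),
     depth_le x h <->
     (forall psi : nat -> form n, (forall j, 0 < j <= h -> kform k (psi j)) ->
        sval x (subst psi (@Bh n m h))))
  /\
  (forall h, 0 < h ->
     (forall x : form n -> Prop,
        mcs (ext L (@Bh n m h)) k x <->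
        exists w : fW (restrict_depth (canon L k) h), sval (sval w) = x)
     /\
     (forall (a b : fW (canon (ext L (@Bh n m h)) k))
             (a' b' : fW (restrict_depth (canon L k) h)) (i : 'I_n),
        sval a = sval (sval a') -> sval b = sval (sval b') ->
        (fR (canon (ext L (@Bh n m h)) k) i a b <->
         fR (restrict_depth (canon L k) h) i a' b'))).
Proof.
move=> HL _ _ [Hpt _]; split=> [x h|h _]; first exact: canon_depth_leP.
split=> [x|a b a' b' i Ea Eb]; last by rewrite /= Ea Eb.
split=> [Hx|[[y Hy] <-] /=]; last by move/depth_leP: Hy; exact: canon_shallow_mcs_ext.
have HxL := mcs_ext_mcs HL Hx.
have Hd : depth_le (exist _ x HxL : fW (canon L k)) h.
  apply/(canon_depth_leP HL Hpt) => psi Hpsi.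
  apply: (mcs_L (normal_ext _ HL) Hx); first exact/ext_Sub/ext_A.
  exact: kform_subst_Bh.
by exists (exist (fun w => depth_le w h) _ Hd).
Qed.
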